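(* Let $\mathcal N=\begin{pmatrix}N&\pi\\ \sigma&-N^*\end{pmatrix}$ be a paired operator on the standard Courant algebroid $A\oplus A^*$ such that $N\pi^\sharp=\pi^\sharp N^*$ and $i_{NX}\sigma=N^*(i_X\sigma)$ for all $X\in\Gamma(A)$. If $\mathcal T_{\mathcal N}(\alpha,\beta)=0$ for all $\alpha,\beta\in\Gamma(A^* )$ and $\mathcal T_{\mathcal N}(X,Y)=0$ for all $X,Y\in\Gamma(A)$, then $(A,\pi,N,\mathrm{d}\sigma)$ is a Poisson quasi-Nijenhuis Lie algebroid.
   Context: $(A,[\cdot,\cdot],\rho)$ is a Lie algebroid over $M$ with differential $\mathrm{d}$. The standard Courant algebroid on $A\oplus A^*$: pairing $\langle X+\alpha,Y+\beta\rangle=\alpha(Y)+\beta(X)$, anchor $\rho(X+\alpha)=\rho(X)$, bracket $[\![X+\alpha,Y+\beta]\!]=[X,Y]+\mathcal L_X\beta-\mathcal L_Y\alpha+\tfrac12\mathrm{d}(\alpha(Y)-\beta(X))$. A paired operator is a bundle map $\mathcal N$ over the identity with $\langle e_1,\mathcal Ne_2\rangle+\langle\mathcal Ne_1,e_2\rangle=0$; equivalently $\mathcal N=\begin{pmatrix}N&\pi\\ \sigma&-N^*\end{pmatrix}$, $N:A\to A$, $\pi\in\Gamma(\wedge^2A)$ acting by $\pi^\sharp\alpha=i_\alpha\pi$, $\sigma\in\Gamma(\wedge^2A^* )$ acting by $X\mapsto i_X\sigma$. $[\![e_1,e_2]\!]_{\mathcal N}=[\![\mathcal Ne_1,e_2]\!]+[\![e_1,\mathcal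 Ne_2]\!]-\mathcal N[\![e_1,e_2]\!]$, $\mathcal T_{\mathcal N}(e_1,e_2)=[\![\mathcal Ne_1,\mathcal Ne_2]\!]-\mathcal N[\![e_1,e_2]\!]_{\mathcal N}$. Poisson quasi-Nijenhuis Lie algebroid $(A,\pi,N,\phi)$: $\pi\in\Gamma(\wedge^2A)$ Poisson; $N:A\to A$ compatible with $\pi$, i.e. $N\pi^\sharp=\pi^\sharp N^*$ and $[\alpha,\beta]_{N\pi}=[N^*\alpha,\beta]_\pi+[\alpha,N^*\beta]_\pi-N^*[\alpha,\beta]_\pi$, where $[\alpha,\beta]_\pi=\mathcal L_{\pi^\sharp\alpha}\beta-\mathcal L_{\pi^\sharp\beta}\alpha-\mathrm{d}(\pi(\alpha,\beta))$ and $[\cdot,\cdot]_{N\pi}$ is the same with $N\pi$; $\phi\in\Gamma(\wedge^3A^* )$ closed with $\mathcal T_N(X,Y)=-\pi^\sharp(i_{X\wedge Y}\phi)$ and $\mathrm{d}(i_N\phi)=0$, where $\mathcal T_N(X,Y)=[NX,NY]-N([NX,Y]+[X,NY]-N[X,Y])$ and $(i_N\phi)(X,Y,Z)=\phi(NX,Y,Z)+\phi(X,NY,Z)+\phi(X,Y,NZ)$. *)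

(* Algebraic (Lie–Rinehart) model of a Lie algebroid:
   C  = ring of functions on M, E = Gamma(A) as a C-module (finitely generated
   projective, i.e. sections of a vector bundle), 1-forms Gamma(A^* ) are
   C-linear maps E -> C, k-forms are C-multilinear alternating maps. *)
From HB Require Import structures.
From mathcomp Require Import all_boot all_order all_algebra.
Set Implicit Arguments. Unset Strict Implicit. Unset Printing Implicit Defensive.
Import Order.TTheory GRing.Theory Num.Theory.
Local Open Scope ring_scope.

Section LieAlgebroidDefs.
Variables (C : comUnitRingType) (E : lmodType C).

(* functions E -> C; the sections of A^* are the C-linear ones *)
Definition form1 := E -> C.
Definition lin1 (a : form1) : Prop :=
  forall (f : C) (X Y : E), a (f *: X + Y) = f * a X + a Y.

Record lie_algebroid (rho : E -> C -> C) (br : E -> E -> E) : Prop := {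
  (* Gamma(A) is finitely generated projective (dual basis lemma): sections of a vector bundle *)
  la_fgproj : exists n (e : 'I_n -> E) (c : 'I_n -> form1),
      (forall i, lin1 (c i)) /\ (forall X, X = \sum_(i < n) c i X *: e i);
  la_anchor_lin : forall (f g : C) (X Y : E), rho (f *: X + Y) g = f * rho X g + rho Y g;
  la_anchor_add : forall (X : E) (g h : C), rho X (g + h) = rho X g + rho X h;
  la_anchor_mul : forall (X : E) (g h : C), rho X (g * h) = g * rho X h + rho X g * h;
  la_br_add : forall X Y Z : E, br (X + Y) Z = br X Z + br Y Z;
  la_br_skew : forall X Y : E, br X Y = - br Y X;
  la_br_jacobi : forall X Y Z : E,
      br X (br Y Z) + br Y (br Z X) + br Z (br X Y) = 0;
  la_br_leibniz : forall (f : C) (X Y : E), br X (f *: Y) = f *: br X Y + rho X f *: Y;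
  la_anchor_br : forall (X Y : E) (f : C),
      rho (br X Y) f = rho X (rho Y f) - rho Y (rho X f)
}.

Variables (rho : E -> C -> C) (br : E -> E -> E).

Definition d0 (f : C) : form1 := fun Y => rho Y f.
Definition lie (X : E) (b : form1) : form1 := fun Y => rho X (b Y) - b (br X Y).
Definition d2 (s : E -> E -> C) : E -> E -> E -> C := fun X Y Z =>
  rho X (s Y Z) - rho Y (s X Z) + rho Z (s X Y)
  - s (br X Y) Z + s (br X Z) Y - s (br Y Z) X.
Definition d3 (p : E -> E -> E -> C) : E -> E -> E -> E -> C := fun X0 X1 X2 X3 =>
  rho X0 (p X1 X2 X3) - rho X1 (p X0 X2 X3) + rho X2 (p X0 X1 X3) - rho X3 (p X0 X1 X2)
  - p (br X0 X1) X2 X3 + p (br X0 X2) X1 X3 - p (br X0 X3) X1 X2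
  - p (br X1 X2) X0 X3 + p (br X1 X3) X0 X2 - p (br X2 X3) X0 X1.

(* the standard Courant algebroid A + A^*; elements are pairs (X, alpha) *)
Definition half : C := (2%:R)^-1.
Definition pair_add (e1 e2 : E * form1) : E * form1 :=
  (e1.1 + e2.1, fun Z => e1.2 Z + e2.2 Z).
Definition pair_sub (e1 e2 : E * form1) : E * form1 :=
  (e1.1 - e2.1, fun Z => e1.2 Z - e2.2 Z).
Definition courant_zero (e : E * form1) : Prop := e.1 = 0 /\ forall Z, e.2 Z = 0.
Definition cbr (e1 e2 : E * form1) : E * form1 :=
  (br e1.1 e2.1,
   fun Z => lie e1.1 e2.2 Z - lie e2.1 e1.2 Z + half * d0 (e1.2 e2.1 - e2.2 e1.1) Z).

(* paired operator calN = [[N, pi],[sigma, -N^*]], pi^# = pis, i_X sigma = sg X *)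
Definition dual (N : E -> E) (a : form1) : form1 := fun Z => a (N Z).
Definition pairedOp (N : E -> E) (pis : form1 -> E) (sg : E -> E -> C)
  (e : E * form1) : E * form1 :=
  (N e.1 + pis e.2, fun Z => sg e.1 Z - e.2 (N Z)).
Definition cbrN (M : E * form1 -> E * form1) (e1 e2 : E * form1) : E * form1 :=
  pair_sub (pair_add (cbr (M e1) e2) (cbr e1 (M e2))) (M (cbr e1 e2)).
Definition torsionC (M : E * form1 -> E * form1) (e1 e2 : E * form1) : E * form1 :=
  pair_sub (cbr (M e1) (M e2)) (M (cbrN M e1 e2)).

Definition lin_endo (N : E -> E) : Prop :=
  forall (f : C) (X Y : E), N (f *: X + Y) = f *: N X + N Y.
(* pi in Gamma(wedge^2 A), given through pi^# : A^* -> A, pi(a,b) = b(pi^# a) *)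
Definition bivector (pis : form1 -> E) : Prop :=
  (forall (f : C) (a b : form1), lin1 a -> lin1 b ->
      pis (fun Z => f * a Z + b Z) = f *: pis a + pis b)
  /\ (forall a b : form1, lin1 a -> lin1 b -> b (pis a) = - a (pis b)).
Definition two_form (sg : E -> E -> C) : Prop :=
  (forall (f : C) (X Y Z : E), sg (f *: X + Y) Z = f * sg X Z + sg Y Z)
  /\ (forall X Y : E, sg X Y = - sg Y X).

Definition brP (P : form1 -> E) (a b : form1) : form1 :=
  fun Z => lie (P a) b Z - lie (P b) a Z - d0 (b (P a)) Z.
Definition nijT (N : E -> E) (X Y : E) : E :=
  br (N X) (N Y) - N (br (N X) Y + br X (N Y) - N (br X Y)).
Definition iN (N : E -> E) (p : E -> E -> E -> C) : E -> E -> E -> C :=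
  fun X Y Z => p (N X) Y Z + p X (N Y) Z + p X Y (N Z).
(* i_{X /\ Y} phi = i_X i_Y phi *)
Definition iXY (p : E -> E -> E -> C) (X Y : E) : form1 := fun Z => p Y X Z.

Record PqN (pis : form1 -> E) (N : E -> E) (p : E -> E -> E -> C) : Prop := {
  (* [pi,pi] = 0, i.e. pi^# [a,b]_pi = [pi^# a, pi^# b] *)
  pqn_poisson : forall a b, lin1 a -> lin1 b ->
      br (pis a) (pis b) = pis (brP pis a b);
  pqn_compat1 : forall a, lin1 a -> N (pis a) = pis (dual N a);
  pqn_compat2 : forall a b, lin1 a -> lin1 b -> forall Z,
      brP (fun c => N (pis c)) a b Z
      = brP pis (dual N a) b Z + brP pis a (dual N b) Z - dual N (brP pis a b) Z;
  pqn_closed : forall X0 X1 X2 X3, d3 p X0 X1 X2 X3 = 0;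
  pqn_torsion : forall X Y, nijT N X Y = - pis (iXY p X Y);
  pqn_diN : forall X0 X1 X2 X3, d3 (iN N p) X0 X1 X2 X3 = 0
}.

End LieAlgebroidDefs.

From Pilot Require Import Defs.
From HB Require Import structures.
From mathcomp Require Import all_boot all_order all_algebra.
From mathcomp Require Import ring.
From Stdlib Require Import FunctionalExtensionality.
Import GRing.Theory.
Local Open Scope ring_scope.
Set Implicit Arguments. Unset Strict Implicit.

(* Evaluate the torsion of the paired operator on pairs of 1-forms and on pairs
   of sections.  For 1-forms a, b, the A-component of T(a, b) is
   [pi^# a, pi^# b] - pi^# [a, b]_pi, so pi is Poisson, and the A^*-component,
   after using N pi^# = pi^# N^*, is exactly the compatibility of [.,.]_{N pi}
   with [.,.]_pi.  For sections X, Y, the A-component of T(X, Y) says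
   T_N(X, Y) = pi^#(d sigma(X, Y, .)), and its A^*-component identifies
   i_N d sigma with d sigma_N, where sigma_N(X, Y) = sigma(N X, Y) is again a
   2-form since N is sigma-symmetric.  Thus d sigma and i_N d sigma are both
   exact, hence closed. *)

Section AdditiveMorphism.
Variables (U V : zmodType) (f : U -> V).
Hypothesis fD : {morph f : x y / x + y}.

Lemma morph_add0 : f 0 = 0.
Proof. by apply: (@addrI _ (f 0)); rewrite -fD !addr0. Qed.

Lemma morph_addN x : f (- x) = - f x.
Proof. by apply: (@addrI _ (f x)); rewrite -fD !subrr morph_add0. Qed.

End AdditiveMorphism.

Section LinearMaps.
Variables (C : comUnitRingType) (E : lmodType C).

Lemma half_add (x : C) :
  (2%:R : C) \is a GRing.unit -> Defs.half C * x + Defs.half C * x = x.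
Proof. by move=> h2; rewrite -mulrDl -mulr2n -mulr_natr /Defs.half mulVr // mul1r. Qed.

Lemma lin1D (a : form1 E) : lin1 a -> {morph a : X Y / X + Y}.
Proof. by move=> la X Y; have := la 1 X Y; rewrite scale1r mul1r. Qed.

Lemma lin1_0 (a : form1 E) : lin1 a -> a 0 = 0.
Proof. by move/lin1D/morph_add0. Qed.

Lemma lin1_0f : lin1 (fun _ : E => 0 : C).
Proof. by move=> f X Y; rewrite mulr0 addr0. Qed.

Section LinEndo.
Variable N : E -> E.
Hypothesis NL : lin_endo N.

Lemma lin_endoD : {morph N : X Y / X + Y}.
Proof. by move=> X Y; have := NL 1 X Y; rewrite !scale1r. Qed.

Lemma lin_endo0 : N 0 = 0.
Proof. exact/morph_add0/lin_endoD. Qed.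

Lemma lin1_dual (a : form1 E) : lin1 a -> lin1 (dual N a).
Proof. by move=> la f X Y; rewrite /dual NL la. Qed.

Lemma two_form_comp (s : E -> E -> C) :
  two_form s -> (forall X Y, s (N X) Y = s X (N Y)) -> two_form (fun X Y => s (N X) Y).
Proof.
move=> [sL sK] sN; split=> [f X Y Z|X Y]; first by rewrite NL sL.
by rewrite sN sK.
Qed.

End LinEndo.

Section Bivector.
Variable pis : form1 E -> E.
Hypothesis pisB : bivector pis.

Lemma bivector0 : pis (fun _ => 0) = 0.
Proof.
apply: (@addrI _ (pis (fun _ => 0))); rewrite addr0.
have := pisB.1 1 _ _ lin1_0f lin1_0f; rewrite scale1r => <-.
by congr pis; apply: functional_extensionality => Z; rewrite mulr0 addr0.
Qed.

Lemma bivectorN (a : form1 E) : lin1 a -> pis (fun Z => - a Z) = - pis a.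
Proof.
move=> la; have := pisB.1 (-1) _ _ la lin1_0f; rewrite bivector0 addr0 scaleN1r => <-.
by congr pis; apply: functional_extensionality => Z; rewrite addr0 mulN1r.
Qed.

End Bivector.
End LinearMaps.

Section LieAlgebroid.
Variables (C : comUnitRingType) (E : lmodType C).
Variables (rho : E -> C -> C) (br : E -> E -> E).
Hypothesis LA : lie_algebroid rho br.

Lemma anchor0 X : rho X 0 = 0.
Proof. exact/morph_add0/(la_anchor_add LA). Qed.

Lemma anchorN X g : rho X (- g) = - rho X g.
Proof. exact/morph_addN/(la_anchor_add LA). Qed.

Lemma anchorDl X Y g : rho (X + Y) g = rho X g + rho Y g.
Proof. by have := la_anchor_lin LA 1 g X Y; rewrite scale1r mul1r. Qed.

Lemma anchor0l g : rho 0 g = 0.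
Proof. exact: (@morph_add0 _ _ (rho^~ g) (fun X Y => anchorDl X Y g)). Qed.

Lemma br0l Z : br 0 Z = 0.
Proof. exact: (@morph_add0 _ _ (br^~ Z) (fun X Y => la_br_add LA X Y Z)). Qed.

Lemma brDr Z : {morph br Z : X Y / X + Y}.
Proof. by move=> X Y; rewrite (la_br_skew LA) (la_br_add LA) opprD -!(la_br_skew LA). Qed.

Lemma br0r Z : br Z 0 = 0.
Proof. by rewrite (la_br_skew LA) br0l oppr0. Qed.

Lemma brNr Z X : br Z (- X) = - br Z X.
Proof. exact/morph_addN/brDr. Qed.

Lemma br_jacobi_swap X Y Z : br (br X Y) Z = br (br X Z) Y - br (br Y Z) X.
Proof.
rewrite (la_br_skew LA (br X Y)) (la_br_skew LA (br X Z)) (la_br_skew LA X Z).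
rewrite brNr opprK (la_br_skew LA (br Y Z)) opprK.
apply/eqP; rewrite eq_sym -subr_eq0 opprK (addrC (br Y _)).
by rewrite (la_br_jacobi LA).
Qed.

Lemma cbr_forms (a b : form1 E) :
  lin1 a -> lin1 b -> cbr rho br (0, a) (0, b) = (0, fun _ => 0).
Proof.
move=> la lb; rewrite /cbr /=; congr pair; first exact: br0l.
apply: functional_extensionality => Z.
by rewrite /lie /d0 !anchor0l br0l !lin1_0 // !subrr anchor0 mulr0 addr0.
Qed.

Lemma cbr_vectors X Y :
  cbr rho br (X, fun _ => 0) (Y, fun _ => 0) = (br X Y, fun _ => 0).
Proof.
congr pair; apply: functional_extensionality => Z.
by rewrite /lie /d0 !anchor0 !subrr anchor0 mulr0 addr0.
Qed.

Section TwoForm.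
Variable s : E -> E -> C.
Hypothesis s2 : two_form s.

Lemma two_formDl U V W : s (U + V) W = s U W + s V W.
Proof. by have := s2.1 1 U V W; rewrite scale1r mul1r. Qed.

Lemma two_form0l W : s 0 W = 0.
Proof. exact: (@morph_add0 _ _ (s^~ W) (fun U V => two_formDl U V W)). Qed.

Lemma two_formNl U W : s (- U) W = - s U W.
Proof. exact: (@morph_addN _ _ (s^~ W) (fun U V => two_formDl U V W)). Qed.

Lemma two_formZl f U W : s (f *: U) W = f * s U W.
Proof. by have := s2.1 f U 0 W; rewrite !addr0 two_form0l addr0. Qed.

Lemma two_form_linr f U W1 W2 : s U (f *: W1 + W2) = f * s U W1 + s U W2.
Proof. by rewrite s2.2 s2.1 (s2.2 W1) (s2.2 W2); ring. Qed.

Lemma d2_skew U V W : d2 rho br s U V W = - d2 rho br s V U W.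
Proof. by rewrite /d2 (s2.2 V U) (la_br_skew LA V U) two_formNl anchorN; ring. Qed.

Lemma lin1_d2 U V : lin1 (d2 rho br s U V).
Proof.
move=> f W1 W2; rewrite /d2 !two_form_linr (la_anchor_lin LA) !brDr.
rewrite !(la_br_leibniz LA) !two_formDl !two_formZl !(la_anchor_add LA).
by rewrite !(la_anchor_mul LA) (s2.2 W1 V) (s2.2 W1 U); ring.
Qed.

(* d o d = 0: the anchor terms cancel since rho preserves brackets, the
   remaining ones by the Jacobi identity. *)
Lemma d3_d2_eq0 X0 X1 X2 X3 : d3 rho br (d2 rho br s) X0 X1 X2 X3 = 0.
Proof.
rewrite /d3 /d2 !(la_anchor_add LA) !anchorN !(la_anchor_br LA).
rewrite (br_jacobi_swap X0 X1 X2) (br_jacobi_swap X0 X1 X3).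
rewrite (br_jacobi_swap X0 X2 X3) (br_jacobi_swap X1 X2 X3) !two_formDl !two_formNl.
rewrite (s2.2 (br X2 X3) (br X0 X1)) (s2.2 (br X1 X3) (br X0 X2)).
by rewrite (s2.2 (br X1 X2) (br X0 X3)); ring.
Qed.

End TwoForm.
End LieAlgebroid.

Section PairedOperator.
Variables (C : comUnitRingType) (E : lmodType C).
Variables (rho : E -> C -> C) (br : E -> E -> E).
Variables (N : E -> E) (pis : form1 E -> E) (sg : E -> E -> C).
Hypotheses (two_unit : (2%:R : C) \is a GRing.unit) (LA : lie_algebroid rho br).
Hypotheses (NL : lin_endo N) (pisB : bivector pis) (sgF : two_form sg).
Local Notation calN := (pairedOp N pis sg).

Lemma pairedOp_form (a : form1 E) : calN (0, a) = (pis a, fun Z => - a (N Z)).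
Proof.
rewrite /pairedOp /= lin_endo0 // add0r; congr pair.
by apply: functional_extensionality => Z; rewrite two_form0l // sub0r.
Qed.

Lemma pairedOp_vector X : calN (X, fun _ => 0) = (N X, sg X).
Proof.
rewrite /pairedOp /= bivector0 // addr0; congr pair.
by apply: functional_extensionality => Z; rewrite subr0.
Qed.

Lemma cbrN_forms a b :
  lin1 a -> lin1 b -> cbrN rho br calN (0, a) (0, b) = (0, brP rho br pis a b).
Proof.
move=> la lb; rewrite /cbrN !pairedOp_form cbr_forms // pairedOp_form bivector0 //.
rewrite /pair_sub /pair_add /cbr /=; congr pair.
  by rewrite (br0l LA) (br0r LA) !addr0 subrr.
apply: functional_extensionality => Z.
rewrite /brP /lie /d0 !(anchor0l LA) !(br0l LA) lin_endo0 // !lin1_0 //.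
rewrite !oppr0 (pisB.2 a b la lb) !(anchorN LA) opprK.
(* skew-symmetry of pi merges the two halves of the d-term of the Courant bracket *)
by rewrite -[in RHS](half_add (rho Z (a (pis b)))) // !add0r !addr0; ring.
Qed.

Lemma cbrN_vectors X Y :
  cbrN rho br calN (X, fun _ => 0) (Y, fun _ => 0)
  = (br (N X) Y + br X (N Y) - N (br X Y), d2 rho br sg X Y).
Proof.
rewrite /cbrN !pairedOp_vector cbr_vectors // pairedOp_vector.
rewrite /pair_sub /pair_add /cbr /=; congr pair.
apply: functional_extensionality => Z.
rewrite /lie /d0 /d2 !(anchor0 LA) (sgF.2 Y X) (sgF.2 Y (br X Z)) (sgF.2 X (br Y Z)).
rewrite !subr0 !sub0r !(anchorN LA) -[in RHS](half_add (rho Z (sg X Y))) //.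
by ring.
Qed.

Section FormTorsion.
Variables a b : form1 E.
Hypotheses (la : lin1 a) (lb : lin1 b).
Hypothesis Tab : courant_zero (torsionC rho br calN (0, a) (0, b)).

Lemma torsion_forms_poisson : br (pis a) (pis b) = pis (brP rho br pis a b).
Proof.
by case: Tab; rewrite /torsionC cbrN_forms // !pairedOp_form /= => /subr0_eq.
Qed.

Hypothesis N_pis : forall c, lin1 c -> N (pis c) = pis (dual N c).

Lemma torsion_forms_compat Z :
  brP rho br (fun c => N (pis c)) a b Z
  = brP rho br pis (dual N a) b Z + brP rho br pis a (dual N b) Z
    - dual N (brP rho br pis a b) Z.
Proof.
have [_ /(_ Z)] := Tab; rewrite /torsionC cbrN_forms // !pairedOp_form /=.
move=> /eqP; rewrite subr_eq0 => /eqP brP_N.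
have skewN : b (N (pis a)) = - a (N (pis b)).
  by rewrite N_pis // (pisB.2 _ _ (lin1_dual NL la) lb).
rewrite [dual N _ Z]/dual -[brP _ _ _ _ _ (N Z)]opprK -brP_N /brP /lie /d0 /=.
rewrite -(N_pis la) -(N_pis lb) /dual skewN.
rewrite !(la_anchor_add LA) !(anchorN LA) !opprK mulrDr half_add //.
by ring.
Qed.

End FormTorsion.

Section VectorTorsion.
Variables X Y : E.
Hypothesis TXY : courant_zero (torsionC rho br calN (X, fun _ => 0) (Y, fun _ => 0)).

Lemma torsion_vectors_nijT : nijT br N X Y = pis (d2 rho br sg X Y).
Proof.
case: TXY; rewrite /torsionC cbrN_vectors !pairedOp_vector /= => TXY1 _.
by rewrite /nijT; apply/eqP; rewrite -subr_eq0 -addrA -opprD TXY1.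
Qed.

Lemma torsion_vectors_d2 Z :
  d2 rho br sg X Y (N Z) = sg (br (N X) Y + br X (N Y) - N (br X Y)) Z
    - (cbr rho br (N X, sg X) (N Y, sg Y)).2 Z.
Proof.
have [_ /(_ Z)] := TXY; rewrite /torsionC cbrN_vectors !pairedOp_vector /= => TXY2.
by apply/eqP; rewrite -subr_eq0; apply/eqP; rewrite -[RHS]TXY2; ring.
Qed.

End VectorTorsion.

Lemma bivector_iXY_d2 X Y : pis (iXY (d2 rho br sg) X Y) = - pis (d2 rho br sg X Y).
Proof.
rewrite /iXY -bivectorN //; last exact: lin1_d2.
by congr pis; apply: functional_extensionality => Z; rewrite d2_skew.
Qed.

Hypothesis sg_N : forall X Y, sg (N X) Y = sg X (N Y).

Lemma iN_d2 :
  (forall X Y, courant_zero (torsionC rho br calN (X, fun _ => 0) (Y, fun _ => 0))) ->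
  iN N (d2 rho br sg) = d2 rho br (fun X Y => sg (N X) Y).
Proof.
move=> TX; apply: functional_extensionality => X.
apply: functional_extensionality => Y; apply: functional_extensionality => Z.
rewrite /iN (torsion_vectors_d2 (TX X Y)) /cbr /= /d2 /lie /d0.
rewrite (sgF.2 Y (br (N X) Z)) (sgF.2 X (br (N Y) Z)) (sgF.2 Y (N X)) !sg_N.
rewrite !two_formDl // !two_formNl // !(la_anchor_add LA) !(anchorN LA) !opprK.
by rewrite mulrDr half_add // !sg_N; ring.
Qed.

End PairedOperator.

Unset Implicit Arguments.

Theorem mainTheorem7 (C : comUnitRingType) (E : lmodType C)
  (rho : E -> C -> C) (br : E -> E -> E)
  (N : E -> E) (pis : form1 E -> E) (sg : E -> E -> C) :
  (2%:R : C) \is a GRing.unit ->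
  lie_algebroid rho br ->
  lin_endo N -> bivector pis -> two_form sg ->
  (forall a : form1 E, lin1 a -> N (pis a) = pis (dual N a)) ->
  (forall X Y : E, sg (N X) Y = sg X (N Y)) ->
  (forall a b : form1 E, lin1 a -> lin1 b ->
     courant_zero (torsionC rho br (pairedOp N pis sg) (0, a) (0, b))) ->
  (forall X Y : E,
     courant_zero (torsionC rho br (pairedOp N pis sg) (X, fun _ => 0) (Y, fun _ => 0))) ->
  PqN rho br pis N (d2 rho br sg).
Proof.
move=> two_unit LA NL pisB sgF N_pis sg_N TA TX; split.
- by move=> a b la lb; apply: torsion_forms_poisson (TA a b la lb).
- exact: N_pis.
- by move=> a b la lb; apply: torsion_forms_compat (TA a b la lb) N_pis.
- exact: d3_d2_eq0.
- by move=> X Y; rewrite bivector_iXY_d2 // opprK; apply: torsion_vectors_nijT (TX X Y).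
- rewrite (iN_d2 two_unit LA pisB sgF sg_N TX).
  by apply: d3_d2_eq0 => //; apply: two_form_comp.
Qed.
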